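(* Let $F:\mathbb{R}^d\to\mathbb{R}$ be strongly convex with convexity parameter $\tau>0$ and belong to $C^{1,1}(\mathbb{R}^d)$ with gradient-Lipschitz constant $L>0$, and let $\boldsymbol x^*$ be its global minimizer. Fix $M\ge1$ and $0<\sigma<1$, and let $C>0$ be a constant such that for every $\boldsymbol x\in\mathbb{R}^d$ and every unit vector $\boldsymbol\xi\in\mathbb{R}^d$, $$\big|\widetilde{\mathscr{D}}^M[G_\sigma(0\,|\,\boldsymbol x,\boldsymbol\xi)]-\mathscr{D}[G_\sigma(0\,|\,\boldsymbol x,\boldsymbol\xi)]\big|\le C\,\frac{M!\,\sqrt{\pi}}{2^M\,(2M)!}\,\sigma^{2M-1}.$$ Let $\boldsymbol x_0\in\mathbb{R}^d$ and define $\boldsymbol x_{t+1}=\boldsymbol x_t-\lambda\,\widetilde{\nabla}^M_{\sigma,\boldsymbol\Xi_t}[F](\boldsymbol x_t)$ for $t\ge0$, with $\lambda=1/(8L)$ and where each $\boldsymbol\Xi_t$ is an (arbitrary) orthonormal basis of $\mathbb{R}^d$. Then for every $t\ge0$, $$F(\boldsymbol x_t)-F(\boldsymbol x^* )\le\frac12 L\Big[\delta_\sigma+\Big(1-\frac{\tau}{16L}\Big)^t\big(\|\boldsymbol x_0-\boldsymbol x^*\|^2-\delta_\sigma\big)\Big],$$ where $$\delta_\sigma=\Big(\frac{128}{\tau^2}+\frac{16}{\tau L}\Big)L^2 d\,\sigma^2+\Big(\frac{8}{\tau^2}+\frac{1}{2\tau L}\Big)\frac{C^2(M!)^2\pi d}{4^M((2M)!)^2}\,\sigma^2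 .$$
   Context: $F\in C^{1,1}(\mathbb{R}^d)$ means there is $L>0$ with $\|\nabla F(\boldsymbol x+\boldsymbol\xi)-\nabla F(\boldsymbol x)\|\le L\|\boldsymbol\xi\|$ for all $\boldsymbol x,\boldsymbol\xi$; $\|\cdot\|$ is the Euclidean norm. $F$ is strongly convex with parameter $\tau>0$ if $F(\boldsymbol x+\boldsymbol\xi)\ge F(\boldsymbol x)+\langle\nabla F(\boldsymbol x),\boldsymbol\xi\rangle+\frac\tau2\|\boldsymbol\xi\|^2$ for all $\boldsymbol x,\boldsymbol\xi$. For $\boldsymbol x\in\mathbb{R}^d$ and a unit vector $\boldsymbol\xi$, set $G(y\,|\,\boldsymbol x,\boldsymbol\xi)=F(\boldsymbol x+y\boldsymbol\xi)$ for $y\in\mathbb{R}$, and $G_\sigma(y\,|\,\boldsymbol x,\boldsymbol\xi)=\mathbb{E}_{v\sim\mathcal N(0,1)}[G(y+\sigma v\,|\,\boldsymbol x,\boldsymbol\xi)]$. Its derivative at $0$ is $\mathscr{D}[G_\sigma(0\,|\,\boldsymbol x,\boldsymbol\xi)]=\frac1\sigma\mathbb{E}_{v\sim\mathcal N(0,1)}[G(\sigma v\,|\,\boldsymbol x,\boldsymbol\xi)\,v]$. The Gauss–Hermite estimator is $\widetilde{\mathscr{D}}^M[G_\sigma(0\,|\,\boldsymbol x,\boldsymbol\xi)]=\frac{1}{\sqrt\pi\,\sigma}\sum_{m=1}^M w_m F(\boldsymbol x+\sqrt2\sigma v_m\boldsymbol\xi)\sqrt2 v_m$, where $v_1,\ldots,v_M$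 are the roots of the $M$-th Hermite polynomial $H_M$ (physicists' convention, weight $e^{-v^2}$) and $w_m$ the corresponding Gauss–Hermite quadrature weights. For an orthonormal basis $\boldsymbol\Xi=(\boldsymbol\xi_1,\ldots,\boldsymbol\xi_d)$, the DGS estimator is $\widetilde{\nabla}^M_{\sigma,\boldsymbol\Xi}[F](\boldsymbol x)=\sum_{i=1}^d\widetilde{\mathscr{D}}^M[G_\sigma(0\,|\,\boldsymbol x,\boldsymbol\xi_i)]\,\boldsymbol\xi_i$. *)

From Stdlib Require Import Reals Factorial.
From mathcomp Require Import all_boot.
Set Implicit Arguments.
Unset Strict Implicit.
Open Scope R_scope.

Definition vec (d : nat) := 'I_d -> R.
Definition vadd {d} (x y : vec d) : vec d := fun i => x i + y i.
Definition vsub {d} (x y : vec d) : vec d := fun i => x i - y i.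
Definition vscale {d} (a : R) (x : vec d) : vec d := fun i => a * x i.
Definition dot {d} (x y : vec d) : R := \big[Rplus/0]_(i < d) (x i * y i).
Definition vnorm {d} (x : vec d) : R := sqrt (dot x x).
Definition vsum {d n} (f : 'I_n -> vec d) : vec d :=
  fun j => \big[Rplus/0]_(i < n) f i j.

Definition has_gradient {d} (F : vec d -> R) (g : vec d -> vec d) : Prop :=
  forall x eps, 0 < eps -> exists delta, 0 < delta /\
    forall h, vnorm h < delta ->
      Rabs (F (vadd x h) - F x - dot (g x) h) <= eps * vnorm h.

Definition grad_lipschitz {d} (g : vec d -> vec d) (L : R) : Prop :=
  forall x xi, vnorm (vsub (g (vadd x xi)) (g x)) <= L * vnorm xi.

Definition strongly_convex {d} (F : vec d -> R) (g : vec d -> vec d) (tau : R) : Prop :=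
  forall x xi, F (vadd x xi) >= F x + dot (g x) xi + tau / 2 * (vnorm xi) ^ 2.

Definition orthonormal_basis {d} (Xi : 'I_d -> vec d) : Prop :=
  forall i j, dot (Xi i) (Xi j) = if i == j then 1 else 0.

(** Physicists' Hermite polynomials: H_0 = 1, H_1 = 2x,
    H_{n+2} = 2x H_{n+1} - 2(n+1) H_n.  hermite_aux n x = (H_n x, H_{n+1} x). *)
Fixpoint hermite_aux (n : nat) (x : R) : R * R :=
  match n with
  | O => (1, 2 * x)
  | S k => let (a, b) := hermite_aux k x in (b, 2 * x * b - 2 * INR (S k) * a)
  end.
Definition hermite (n : nat) (x : R) : R := fst (hermite_aux n x).

Definition gh_nodes (M : nat) (nodes : list R) : Prop :=
  List.NoDup nodes /\ forall y, List.In y nodes <-> hermite M y = 0.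

(** Gauss-Hermite weight at node v (weight function e^{-v^2}) *)
Definition gh_weight (M : nat) (v : R) : R :=
  2 ^ (Nat.pred M) * INR (fact M) * sqrt PI
  / (INR M ^ 2 * (hermite (Nat.pred M) v) ^ 2).

(** Gauss-Hermite estimator  ~D^M[G_sigma(0 | x, xi)] *)
Definition gh_deriv {d} (M : nat) (nodes : list R) (F : vec d -> R)
  (sigma : R) (x xi : vec d) : R :=
  / (sqrt PI * sigma) *
  \big[Rplus/0]_(v <- nodes)
     (gh_weight M v * F (vadd x (vscale (sqrt 2 * sigma * v) xi)) * (sqrt 2 * v)).

Definition dgs {d} (M : nat) (nodes : list R) (F : vec d -> R) (sigma : R)
  (Xi : 'I_d -> vec d) (x : vec d) : vec d :=
  vsum (fun i => vscale (gh_deriv M nodes F sigma x (Xi i)) (Xi i)).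

Definition improper_integral (f : R -> R) (l : R) : Prop :=
  (forall a b, inhabited (Riemann_integrable f a b)) /\
  forall eps, 0 < eps -> exists A, forall a b (pr : Riemann_integrable f (- a) b),
    A <= a -> A <= b -> Rabs (RiemannInt pr - l) < eps.

Definition gauss_expect (g : R -> R) (l : R) : Prop :=
  improper_integral (fun v => g v * exp (- (v ^ 2) / 2) / sqrt (2 * PI)) l.

Definition delta_sigma (d M : nat) (tau L sigma C : R) : R :=
  (128 / tau ^ 2 + 16 / (tau * L)) * L ^ 2 * INR d * sigma ^ 2
  + (8 / tau ^ 2 + 1 / (2 * tau * L))
    * (C ^ 2 * (INR (fact M)) ^ 2 * PI * INR d
       / (4 ^ M * (INR (fact (2 * M))) ^ 2)) * sigma ^ 2.

(* Each DGS coordinate is within [(L + B) sigma] of the directional derivative [<gF x, xi>]: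
   the quadrature error [B sigma^(2M-1) <= B sigma] is assumed, and the Gaussian-smoothed derivative
   is within [L sigma] of [<gF x, xi>], because [F (x + s xi) = F x + s <gF x, xi> + O(L s^2)] and
   the Gaussian moments of [v], [v^2], [|v|^3] are [0], [1] and [O(1)].  By Parseval the error [e]
   of the estimator satisfies [|e|^2 <= d (L + B)^2 sigma^2].  By strong convexity and
   [|gF x|^2 <= 2 L (F x - F xstar)], a step along [gF x + e] contracts [|x - xstar|^2] by
   [1 - tau / (16 L)] up to a multiple of [|e|^2]; iterating, and [F x - F xstar <= L/2 |x - xstar|^2],
   give the bound.  The Gaussian integral itself comes from differentiating
   [(int_0^t e^(-v^2/2))^2 + int_0^1 2 e^(-t^2 (1+s^2)/2) / (1+s^2) ds] in [t]. *)

From Stdlib Require Import Reals Factorial Lra Psatz FunctionalExtensionality.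
From mathcomp Require Import all_boot ssralg matrix Rstruct zify.
From Coquelicot Require Import Coquelicot.
Open Scope R_scope.

Lemma exp_le_exp x y : x <= y -> exp x <= exp y.
Proof. by case/Rle_lt_or_eq_dec => [/exp_increasing|->]; lra. Qed.

Lemma pow_le1 s k : 0 <= s <= 1 -> s ^ k <= 1.
Proof.
move=> [s_ge0 s_le1]; elim: k => [|k IH] /=; first lra.
by have := pow_le s k s_ge0; nra.
Qed.

Lemma big_Rle n (f g : 'I_n -> R) : (forall i, f i <= g i) ->
  \big[Rplus/0]_(i < n) f i <= \big[Rplus/0]_(i < n) g i.
Proof. by move=> fg; apply: (big_rec2 (fun a b => a <= b)) => [|i a b _]; [lra | have := fg i; lra]. Qed.

Lemma big_Rge0 n (f : 'I_n -> R) : (forall i, 0 <= f i) -> 0 <= \big[Rplus/0]_(i < n) f i.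
Proof. by move=> f0; apply: (big_rec (fun a => 0 <= a)) => [|i a _]; [lra | have := f0 i; lra]. Qed.

Lemma big_Rconst n (c : R) : \big[Rplus/0]_(i < n) c = INR n * c.
Proof. elim: n => [|n IH]; first by rewrite big_ord0 /=; ring. by rewrite big_ord_recr IH S_INR /=; ring. Qed.

Lemma big_kronecker {n} (g : 'I_n -> R) j :
  \big[Rplus/0]_(k < n) (g k * (if k == j then 1 else 0)) = g j.
Proof.
rewrite (bigD1 j) //= eqxx big1 => [|k /negbTE ->]; rewrite /=; ring.
Qed.

Section Euclidean.
Context {d : nat}.
Implicit Types (x y z : vec d) (a s : R).

Lemma vec_ext x y : (forall i, x i = y i) -> x = y.
Proof. exact: functional_extensionality. Qed.

Lemma vadd_scaleD y x s a : vadd (vadd y (vscale s x)) (vscale a x) = vadd y (vscale (s + a) x).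
Proof. by apply: vec_ext => i; rewrite /vadd /vscale; ring. Qed.

Lemma vadd_scale0 y x : vadd y (vscale 0 x) = y.
Proof. by apply: vec_ext => i; rewrite /vadd /vscale; ring. Qed.

Lemma vaddBC x y : vadd y (vsub x y) = x.
Proof. by apply: vec_ext => i; rewrite /vadd /vsub; ring. Qed.

Lemma dotC x y : dot x y = dot y x.
Proof. by apply: eq_bigr => i _; ring. Qed.

Lemma dotDl x y z : dot (vadd x y) z = dot x z + dot y z.
Proof. by rewrite /dot -big_split; apply: eq_bigr => i _; rewrite /vadd /=; ring. Qed.

Lemma dotZl a x y : dot (vscale a x) y = a * dot x y.
Proof. by rewrite /dot big_distrr; apply: eq_bigr => i _; rewrite /vscale /=; ring. Qed.

Lemma dotBl x y z : dot (vsub x y) z = dot x z - dot y z.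
Proof.
have -> : vsub x y = vadd x (vscale (-1) y) by apply: vec_ext => i; rewrite /vsub /vadd /vscale; ring.
by rewrite dotDl dotZl; ring.
Qed.

Lemma dotDr x y z : dot z (vadd x y) = dot z x + dot z y.
Proof. by rewrite dotC dotDl !(dotC z). Qed.

Lemma dotZr a x y : dot y (vscale a x) = a * dot y x.
Proof. by rewrite dotC dotZl dotC. Qed.

Lemma dotBr x y z : dot z (vsub x y) = dot z x - dot z y.
Proof. by rewrite dotC dotBl !(dotC z). Qed.

Definition dotE := (dotDl, dotDr, dotBl, dotBr, dotZl, dotZr).

Lemma dot_self_ge0 x : 0 <= dot x x.
Proof. by apply: big_Rge0 => i; apply: Rle_0_sqr. Qed.

Lemma vnorm_ge0 x : 0 <= vnorm x.
Proof. exact: sqrt_pos. Qed.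

Lemma vnorm_sqr x : vnorm x ^ 2 = dot x x.
Proof. by rewrite /vnorm pow2_sqrt //; apply: dot_self_ge0. Qed.

Lemma vnorm_scale a x : vnorm (vscale a x) = Rabs a * vnorm x.
Proof.
rewrite /vnorm dotZl dotZr -Rmult_assoc sqrt_mult_alt; last exact: Rle_0_sqr.
by rewrite -/(Rsqr a) sqrt_Rsqr_abs.
Qed.

Lemma vnorm_subC x y : vnorm (vsub y x) = vnorm (vsub x y).
Proof.
have -> : vsub y x = vscale (-1) (vsub x y) by apply: vec_ext => i; rewrite /vsub /vscale; ring.
by rewrite vnorm_scale Rabs_Ropp Rabs_R1 Rmult_1_l.
Qed.

Lemma dot_sqr_le x y : dot x y ^ 2 <= dot x x * dot y y.
Proof.
have quad t : 0 <= dot x x - 2 * t * dot x y + t ^ 2 * dot y y.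
  have := dot_self_ge0 (vsub x (vscale t y)).
  by rewrite !dotE (dotC y x); lra.
move: quad; set xx := dot x x; set xy := dot x y; set yy := dot y y => quad.
have [yy0|yy_neq0] := Req_dec yy 0.
- have [->|xy_neq0] := Req_dec xy 0; first by rewrite yy0; lra.
  (* a vanishing [yy] forces [xy = 0]: the quadratic is then affine in [t] *)
  have := quad ((xx + 1) / (2 * xy)); rewrite yy0.
  have -> : xx - 2 * ((xx + 1) / (2 * xy)) * xy + ((xx + 1) / (2 * xy)) ^ 2 * 0 = -1 by field.
  lra.
- have yy_gt0 : 0 < yy by have := dot_self_ge0 y; rewrite -/yy; lra.
  have := quad (xy / yy).
  have -> : xx - 2 * (xy / yy) * xy + (xy / yy) ^ 2 * yy = (xx * yy - xy ^ 2) / yy by field.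
  move=> h; have := Rmult_le_pos _ _ h (Rlt_le _ _ yy_gt0).
  have -> : (xx * yy - xy ^ 2) / yy * yy = xx * yy - xy ^ 2 by field.
  lra.
Qed.

Lemma dot_young c x y : 0 < c -> 2 * dot x y <= c * dot x x + dot y y / c.
Proof.
move=> c_gt0; have := dot_self_ge0 (vsub (vscale c x) y); rewrite !dotE (dotC y x) => sq.
have -> : c * dot x x + dot y y / c = (c * (c * dot x x) - c * dot x y - (c * dot x y - dot y y)) / c + 2 * dot x y.
  by field; lra.
have : 0 <= (c * (c * dot x x) - c * dot x y - (c * dot x y - dot y y)) / c.
  by apply: Rdiv_le_0_compat; lra.
lra.
Qed.

Lemma cauchy_schwarz x y : Rabs (dot x y) <= vnorm x * vnorm y.
Proof.
rewrite /vnorm -sqrt_mult_alt; last exact: dot_self_ge0.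
rewrite -sqrt_Rsqr_abs; apply: sqrt_le_1_alt.
by have := dot_sqr_le x y; rewrite /Rsqr /=; lra.
Qed.

Lemma dot_vsuml {n} (f : 'I_n -> vec d) y : dot (vsum f) y = \big[Rplus/0]_(i < n) dot (f i) y.
Proof.
rewrite /dot /vsum exchange_big; apply: eq_bigr => j _.
by rewrite big_distrl.
Qed.

Lemma vnorm_dim0 y : d = 0%N -> vnorm y = 0.
Proof. by move=> d0; subst d; rewrite /vnorm /dot big_ord0 sqrt_0. Qed.

End Euclidean.

Section OrthonormalBasis.
Context {d : nat} {Xi : 'I_d -> vec d}.
Hypothesis Xi_on : orthonormal_basis Xi.

Lemma orthonormal_vnorm i : vnorm (Xi i) = 1.
Proof. by rewrite /vnorm Xi_on eqxx sqrt_1. Qed.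

(* Rows of a square matrix are orthonormal iff its columns are: [A A^T = 1] implies [A^T A = 1]. *)
Lemma orthonormal_columns j k :
  \big[Rplus/0]_(i < d) (Xi i j * Xi i k) = if j == k then 1 else 0.
Proof.
pose A : 'M[R]_d := (\matrix_(i, j) Xi i j)%R.
have AAt : (A *m A^T)%R = 1%:M%R.
  apply/matrixP => i i'; rewrite !mxE.
  have -> : (\sum_(l < d) A i l * A^T l i')%R = dot (Xi i) (Xi i').
    by apply: eq_bigr => l _; rewrite !mxE.
  by rewrite Xi_on; case: (i == i').
have := congr1 (fun B : 'M[R]_d => B j k) (mulmx1C AAt); rewrite !mxE.
have -> : ((j == k)%:R)%R = (if j == k then 1 else 0) by case: (j == k).
by move=> <-; apply: eq_bigr => i _; rewrite !mxE.
Qed.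

Lemma orthonormal_expansion g j : g j = \big[Rplus/0]_(i < d) (dot g (Xi i) * Xi i j).
Proof.
rewrite -[LHS](big_kronecker g j).
under eq_bigr do rewrite -orthonormal_columns big_distrr.
rewrite exchange_big; apply: eq_bigr => i _; rewrite /dot big_distrl.
by apply: eq_bigr => k _ /=; ring.
Qed.

Lemma parseval (c : 'I_d -> R) :
  dot (vsum (fun i => vscale (c i) (Xi i))) (vsum (fun i => vscale (c i) (Xi i))) =
  \big[Rplus/0]_(i < d) (c i * c i).
Proof.
rewrite dot_vsuml; apply: eq_bigr => i _; rewrite dotZl dotC dot_vsuml.
under eq_bigr do rewrite dotZl Xi_on.
by rewrite big_kronecker.
Qed.

Lemma vsum_coord_sub (c : 'I_d -> R) g :
  vsub (vsum (fun i => vscale (c i) (Xi i))) g =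
  vsum (fun i => vscale (c i - dot g (Xi i)) (Xi i)).
Proof.
apply: vec_ext => j; rewrite /vsub /vsum /vscale [in X in _ - X](orthonormal_expansion g j).
have -> : forall a b : R, a - b = a + (-1) * b by move=> a b; ring.
by rewrite big_distrr -big_split; apply: eq_bigr => i _ /=; ring.
Qed.

Lemma orthonormal_coord_err_sqr {c : 'I_d -> R} {g : vec d} {E : R} :
  (forall i, Rabs (c i - dot g (Xi i)) <= E) ->
  dot (vsub (vsum (fun i => vscale (c i) (Xi i))) g) (vsub (vsum (fun i => vscale (c i) (Xi i))) g)
    <= INR d * E ^ 2.
Proof.
move=> c_err; rewrite vsum_coord_sub // parseval // -big_Rconst.
apply: big_Rle => i; have := c_err i; have := Rabs_pos (c i - dot g (Xi i)).
have -> : (c i - dot g (Xi i)) * (c i - dot g (Xi i)) = Rabs (c i - dot g (Xi i)) ^ 2.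
  by rewrite pow2_abs; ring.
by nra.
Qed.

End OrthonormalBasis.

Lemma ex_derive_continuous_R (f : R -> R) x : ex_derive f x -> continuous f x.
Proof. exact: (ex_derive_continuous (K := R_AbsRing) (V := R_NormedModule)). Qed.

Lemma ex_RInt_continuous_R (f : R -> R) a b :
  (forall z, Rmin a b <= z <= Rmax a b -> continuous f z) -> ex_RInt f a b.
Proof. exact: (ex_RInt_continuous (V := R_CompleteNormedModule)). Qed.

Lemma RInt_Rplus (f g : R -> R) a b : (forall x, continuous f x) -> (forall x, continuous g x) ->
  RInt (fun x => f x + g x) a b = RInt f a b + RInt g a b.
Proof.
move=> f_cont g_cont.
by apply: (RInt_plus (V := R_CompleteNormedModule)); apply: ex_RInt_continuous_R => z _.
Qed.

Lemma RInt_Rscal (f : R -> R) k a b : (forall x, continuous f x) ->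
  RInt (fun x => k * f x) a b = k * RInt f a b.
Proof.
move=> f_cont.
by apply: (RInt_scal (V := R_CompleteNormedModule)); apply: ex_RInt_continuous_R => z _.
Qed.

Lemma RInt_oppN (f : R -> R) a : (forall x, continuous f x) ->
  RInt f (- a) 0 = RInt (fun y => f (- y)) 0 a.
Proof.
move=> f_cont.
have fN_cont x : continuous (fun y => f (- y)) x.
  by apply: (continuous_comp (fun y => - y) f); [apply/continuous_opp/continuous_id | apply: f_cont].
have ex_f b c : ex_RInt f b c by apply: ex_RInt_continuous_R => z _; apply: f_cont.
have ex_fN b c : ex_RInt (fun y => f (- y)) b c by apply: ex_RInt_continuous_R => z _; apply: fN_cont.
rewrite -(opp_RInt_swap (V := R_CompleteNormedModule)) //.
have := RInt_comp_lin (V := R_CompleteNormedModule) f (-1) 0 0 a.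
have -> : -1 * 0 + 0 = 0 by ring.
have -> : -1 * a + 0 = - a by ring.
move=> <- //; rewrite (RInt_ext _ (fun y => opp (f (- y)))).
  by rewrite RInt_opp // opp_opp.
by move=> y _; rewrite /scal /= /mult /= /opp /=; ring_simplify (-1 * y + 0); ring.
Qed.

Lemma RInt_split0 (f : R -> R) a b : (forall x, continuous f x) ->
  RInt f (- a) b = RInt f 0 b + RInt (fun y => f (- y)) 0 a.
Proof.
move=> f_cont; rewrite -RInt_oppN // Rplus_comm.
by symmetry; apply: (RInt_Chasles (V := R_CompleteNormedModule));
  apply: ex_RInt_continuous_R => z _; apply: f_cont.
Qed.

Lemma MVT_nonneg (psi dpsi : R -> R) s : (forall u, is_derive psi u (dpsi u)) ->
  (forall u, Rmin 0 s <= u <= Rmax 0 s -> 0 <= dpsi u * s) -> psi 0 <= psi s.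
Proof.
move=> psi_der sgn.
destruct (MVT_gen psi 0 s dpsi) as [u [u_in psi_diff]].
- by move=> u _; apply: psi_der.
- by move=> u _; apply: derivable_continuous_pt; exists (dpsi u); apply/is_derive_Reals/psi_der.
- by have := sgn u u_in; rewrite Rminus_0_r in psi_diff; lra.
Qed.

(* Apply [MVT_nonneg] to [u |-> c/2 u^2 +- (G u - G 0 - a u)]. *)
Lemma taylor_lipschitz_deriv (G dG : R -> R) a c s :
  (forall u, is_derive G u (dG u)) ->
  (forall u, Rabs (dG u - a) <= c * Rabs u) -> Rabs (G s - G 0 - a * s) <= c / 2 * s ^ 2.
Proof.
move=> G_der dG_lip.
have sgn u : Rmin 0 s <= u <= Rmax 0 s -> Rabs ((dG u - a) * s) <= c * u * s.
  move=> u_in; have us_ge0 : 0 <= u * s by move: u_in; rewrite /Rmin /Rmax; case: Rle_dec; nra.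
  rewrite Rabs_mult Rmult_assoc -(Rabs_pos_eq _ us_ge0) Rabs_mult -Rmult_assoc.
  by apply: Rmult_le_compat_r; [apply: Rabs_pos | apply: dG_lip].
apply: Rabs_le; split.
- suff : c / 2 * 0 ^ 2 + (G 0 - G 0 - a * 0) <= c / 2 * s ^ 2 + (G s - G 0 - a * s) by nra.
  apply: (MVT_nonneg (fun u => c / 2 * u ^ 2 + (G u - G 0 - a * u)) (fun u => c * u + (dG u - a))).
  + by move=> u; auto_derive; [exists (dG u) | rewrite (is_derive_unique _ _ _ (G_der u)); field].
  + by move=> u /sgn /Rabs_le_between; lra.
- suff : c / 2 * 0 ^ 2 - (G 0 - G 0 - a * 0) <= c / 2 * s ^ 2 - (G s - G 0 - a * s) by nra.
  apply: (MVT_nonneg (fun u => c / 2 * u ^ 2 - (G u - G 0 - a * u)) (fun u => c * u - (dG u - a))).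
  + by move=> u; auto_derive; [exists (dG u) | rewrite (is_derive_unique _ _ _ (G_der u)); field].
  + by move=> u /sgn /Rabs_le_between; lra.
Qed.

Section GaussianIntegral.

Definition gauss (v : R) : R := exp (- (v ^ 2) / 2).

Lemma gauss_gt0 v : 0 < gauss v.
Proof. exact: exp_pos. Qed.

Lemma gaussN v : gauss (- v) = gauss v.
Proof. by rewrite /gauss; ring_simplify ((- v) ^ 2). Qed.

(* the shape in which [auto_derive] leaves [gauss x] *)
Lemma gauss_auto_derive x : exp (- (x * (x * 1)) * / 2) = gauss x.
Proof. by []. Qed.

Lemma gauss_continuous v : continuous gauss v.
Proof. by apply: ex_derive_continuous_R; rewrite /gauss; auto_derive. Qed.

Lemma ex_RInt_gauss a b : ex_RInt gauss a b.
Proof. by apply: ex_RInt_continuous_R => z _; apply: gauss_continuous. Qed.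

Definition gauss_prim (t : R) : R := RInt gauss 0 t.

(* [gauss_prim t ^ 2 + gauss_tail t] is constant in [t]; at [t = 0] it is [atan 1 - atan 0] twice. *)
Definition gauss_tail_integrand (t x : R) : R := 2 * exp (- (t ^ 2 * (1 + x ^ 2)) / 2) / (1 + x ^ 2).
Definition gauss_tail (t : R) : R := RInt (gauss_tail_integrand t) 0 1.

Lemma one_add_sqr_gt0 x : 0 < 1 + x ^ 2.
Proof. by have := pow2_ge_0 x; lra. Qed.

Lemma is_derive_gauss_prim t : is_derive gauss_prim t (gauss t).
Proof.
apply: (is_derive_RInt _ _ 0); last exact: gauss_continuous.
by apply: filter_forall => b; apply: RInt_correct; apply: ex_RInt_gauss.
Qed.

Lemma is_derive_gauss_tail_integrand u x :
  is_derive (fun t => gauss_tail_integrand t x) u (-2 * u * exp (- (u ^ 2 * (1 + x ^ 2)) / 2)).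
Proof.
have := one_add_sqr_gt0 x; rewrite /gauss_tail_integrand => x_pos.
auto_derive; first lra.
match goal with |- context [exp ?A] => replace A with (- (u ^ 2 * (1 + x ^ 2)) / 2) by field end.
by field; lra.
Qed.

Lemma continuity_2d_Derive_gauss_tail_integrand t x :
  continuity_2d_pt (fun u v => Derive (fun z => gauss_tail_integrand z v) u) t x.
Proof.
apply: (continuity_2d_pt_ext (fun u v => (-2 * u) * exp (- (u * u * (1 + v * v)) / 2))).
  move=> u v; rewrite (is_derive_unique _ _ _ (is_derive_gauss_tail_integrand u v)).
  by congr (_ * exp _); field.
apply: continuity_2d_pt_mult.
  by apply: continuity_2d_pt_mult; [apply: continuity_2d_pt_const | apply: continuity_2d_pt_id1].
apply: continuity_1d_2d_pt_comp; first exact/derivable_continuous_pt/derivable_pt_exp.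
apply: continuity_2d_pt_mult; last exact: continuity_2d_pt_const.
apply/continuity_2d_pt_opp/continuity_2d_pt_mult.
  by apply: continuity_2d_pt_mult; apply: continuity_2d_pt_id1.
apply: continuity_2d_pt_plus; first exact: continuity_2d_pt_const.
by apply: continuity_2d_pt_mult; apply: continuity_2d_pt_id2.
Qed.

Lemma gauss_tail_integrand_continuous t x : continuous (gauss_tail_integrand t) x.
Proof.
by apply: ex_derive_continuous_R; rewrite /gauss_tail_integrand; auto_derive; have := one_add_sqr_gt0 x; lra.
Qed.

Lemma is_derive_gauss_tail t : is_derive gauss_tail t (-2 * gauss t * gauss_prim t).
Proof.
have scaled : RInt (fun x => t * gauss (t * x)) 0 1 = gauss_prim t.
  rewrite /gauss_prim; have := RInt_comp_lin gauss t 0 0 1; rewrite Rmult_0_r Rmult_1_r !Rplus_0_r => <-;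
    last exact: ex_RInt_gauss.
  by apply: RInt_ext => x _; rewrite Rplus_0_r.
rewrite -scaled -[_ * _ * RInt _ _ _](RInt_scal (V := R_CompleteNormedModule)); last first.
  by apply: ex_RInt_continuous_R => z _; apply: ex_derive_continuous_R; rewrite /gauss; auto_derive.
have pointwise x : -2 * gauss t * (t * gauss (t * x)) = Derive (fun u => gauss_tail_integrand u x) t.
  rewrite (is_derive_unique _ _ _ (is_derive_gauss_tail_integrand t x)) /gauss.
  have -> : - (t ^ 2 * (1 + x ^ 2)) / 2 = - (t ^ 2) / 2 + - ((t * x) ^ 2) / 2 by field.
  by rewrite exp_plus; ring.
rewrite (RInt_ext _ (fun x => Derive (fun u => gauss_tail_integrand u x) t)); last first.
  by move=> x _; exact: pointwise.
apply (is_derive_RInt_param gauss_tail_integrand).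
- by apply: filter_forall => u x _; eexists; apply: is_derive_gauss_tail_integrand.
- by move=> x _; apply: continuity_2d_Derive_gauss_tail_integrand.
- by apply: filter_forall => u; apply: ex_RInt_continuous_R => z _; apply: gauss_tail_integrand_continuous.
Qed.

Lemma gauss_prim0 : gauss_prim 0 = 0.
Proof. exact: RInt_point. Qed.

Lemma gauss_tail0 : gauss_tail 0 = PI / 2.
Proof.
have pointwise x : gauss_tail_integrand 0 x = 2 * / (1 + x ^ 2).
  rewrite /gauss_tail_integrand; have -> : - (0 ^ 2 * (1 + x ^ 2)) / 2 = 0 by field.
  by rewrite exp_0; field; have := one_add_sqr_gt0 x; lra.
rewrite /gauss_tail (RInt_ext _ _ _ _ (fun x _ => pointwise x)).
apply: is_RInt_unique.
have -> : PI / 2 = minus (2 * atan 1) (2 * atan 0).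
  by rewrite atan_1 atan_0 /minus /plus /opp /=; field.
apply: (is_RInt_derive (V := R_CompleteNormedModule) (fun x => 2 * atan x)).
- by move=> x _; apply/is_derive_Reals/(derivable_pt_lim_scal atan 2)/derivable_pt_lim_atan.
- move=> x _; apply: ex_derive_continuous_R; auto_derive.
  by have := one_add_sqr_gt0 x; lra.
Qed.

Lemma gauss_prim_sqr_add_tail t : gauss_prim t * gauss_prim t + gauss_tail t = PI / 2.
Proof.
set h := fun t => gauss_prim t * gauss_prim t + gauss_tail t.
have h'0 u : derivable_pt_lim h u 0.
  have -> : 0 = (gauss u * gauss_prim u + gauss_prim u * gauss u) + (-2 * gauss u * gauss_prim u) by ring.
  apply: derivable_pt_lim_plus; last exact/is_derive_Reals/is_derive_gauss_tail.
  by apply: derivable_pt_lim_mult; apply/is_derive_Reals/is_derive_gauss_prim.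
destruct (MVT_gen h 0 t (fun _ => 0)) as [c [_ h_const]].
- by move=> u _; apply/is_derive_Reals/h'0.
- by move=> u _; apply: derivable_continuous_pt; exists 0; apply: h'0.
- by move: h_const; rewrite /h gauss_prim0 gauss_tail0; lra.
Qed.

Lemma gauss_prim_ge0 {t} : 0 <= t -> 0 <= gauss_prim t.
Proof.
by move=> t_ge0; apply: RInt_ge_0 => // [|x _]; [apply: ex_RInt_gauss | apply/Rlt_le/gauss_gt0].
Qed.

Lemma gauss_tail_bounds t : 0 <= gauss_tail t <= 2 * gauss t.
Proof.
have ex_int : ex_RInt (gauss_tail_integrand t) 0 1.
  by apply: ex_RInt_continuous_R => z _; apply: gauss_tail_integrand_continuous.
split.
  apply: RInt_ge_0 => // [|x _]; first lra.
  rewrite /gauss_tail_integrand /Rdiv; have := one_add_sqr_gt0 x => x_pos.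
  by apply: Rmult_le_pos; [have := exp_pos (- (t ^ 2 * (1 + x ^ 2)) / 2); lra | apply/Rlt_le/Rinv_0_lt_compat].
have -> : 2 * gauss t = RInt (fun _ => 2 * gauss t) 0 1.
  by rewrite RInt_const /scal /= /mult /=; ring.
apply: RInt_le => // [|| x _]; first lra.
  by apply: ex_RInt_continuous_R => z _; apply: continuous_const.
have x_pos := one_add_sqr_gt0 x.
have exp_le : exp (- (t ^ 2 * (1 + x ^ 2)) / 2) <= gauss t.
  by apply: exp_le_exp; have := pow2_ge_0 t; have := pow2_ge_0 x; nra.
rewrite /gauss_tail_integrand; apply: (Rmult_le_reg_r (1 + x ^ 2)) => //.
rewrite /Rdiv Rmult_assoc Rinv_l; last lra.
by have := pow2_ge_0 x; have := exp_pos (- (t ^ 2 * (1 + x ^ 2)) / 2); nra.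
Qed.

Lemma sqrt_PI2_ge1 : 1 <= sqrt (PI / 2).
Proof. by rewrite -sqrt_1; apply: sqrt_le_1_alt; have := PI2_1; lra. Qed.

Lemma sqrt_2PI : sqrt (2 * PI) = 2 * sqrt (PI / 2).
Proof.
have PI_pos := PI_RGT_0.
apply: sqrt_lem_1; [lra | have := sqrt_pos (PI / 2); lra |].
have -> : 2 * sqrt (PI / 2) * (2 * sqrt (PI / 2)) = 4 * (sqrt (PI / 2) * sqrt (PI / 2)) by ring.
by rewrite sqrt_sqrt; [field | lra].
Qed.

(* As [gauss_prim t + sqrt (PI / 2) >= sqrt (PI / 2) >= 1], the identity of
   [gauss_prim_sqr_add_tail] turns the tail bound into a bound on [gauss_prim t - sqrt (PI / 2)]. *)
Lemma gauss_prim_err {t} : 0 <= t -> Rabs (gauss_prim t - sqrt (PI / 2)) <= 2 * gauss t.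
Proof.
move=> t_ge0; have := gauss_prim_sqr_add_tail t; have := gauss_tail_bounds t.
have := gauss_prim_ge0 t_ge0; have := sqrt_PI2_ge1.
have := sqrt_sqrt (PI / 2) (Rlt_le _ _ PI2_RGT_0).
set s := sqrt (PI / 2); set J := gauss_prim t => s_sqr s_ge1 J_ge0 tail_bd id.
have prod : (J - s) * (J + s) = - gauss_tail t by nra.
by rewrite Rabs_left1; nra.
Qed.

Lemma RInt_gauss_err a b : 0 <= a -> 0 <= b ->
  Rabs (RInt gauss (- a) b - sqrt (2 * PI)) <= 2 * gauss a + 2 * gauss b.
Proof.
move=> a_ge0 b_ge0; rewrite RInt_split0; last exact: gauss_continuous.
rewrite (RInt_ext (fun y => gauss (- y)) gauss) => [|y _]; last exact: gaussN.
rewrite -/(gauss_prim b) -/(gauss_prim a) sqrt_2PI.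
have := gauss_prim_err a_ge0; have := gauss_prim_err b_ge0.
set s := sqrt (PI / 2) => eb ea.
have -> : gauss_prim b + gauss_prim a - 2 * s = (gauss_prim b - s) + (gauss_prim a - s) by ring.
by apply: (Rle_trans _ _ _ (Rabs_triang _ _)); lra.
Qed.

Lemma pow_gauss_continuous n v : continuous (fun v => v ^ n * gauss v) v.
Proof. by apply: ex_derive_continuous_R; rewrite /gauss; auto_derive. Qed.

Lemma ex_RInt_pow_gauss n a b : ex_RInt (fun v => v ^ n * gauss v) a b.
Proof. by apply: ex_RInt_continuous_R => z _; apply: pow_gauss_continuous. Qed.

Lemma RInt_gauss_moment1 a b : RInt (fun v => v ^ 1 * gauss v) (- a) b = gauss a - gauss b.
Proof.
apply: is_RInt_unique.
have -> : gauss a - gauss b = minus (- gauss b) (- gauss (- a)).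
  by rewrite gaussN /minus /plus /opp /=; ring.
apply: (is_RInt_derive (V := R_CompleteNormedModule) (fun v => - gauss v)) => x _.
  by rewrite /gauss; auto_derive => //; rewrite gauss_auto_derive; field.
exact: pow_gauss_continuous.
Qed.

Lemma RInt_gauss_moment2 a b :
  RInt (fun v => v ^ 2 * gauss v) (- a) b = RInt gauss (- a) b - b * gauss b - a * gauss a.
Proof.
have parts : is_RInt (fun v => v ^ 2 * gauss v - gauss v) (- a) b (- b * gauss b - a * gauss a).
  have -> : - b * gauss b - a * gauss a = minus (- b * gauss b) (- (- a) * gauss (- a)).
    by rewrite gaussN /minus /plus /opp /=; ring.
  apply: (is_RInt_derive (V := R_CompleteNormedModule) (fun v => - v * gauss v)) => x _.
    by rewrite /gauss; auto_derive => //; rewrite gauss_auto_derive; field.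
  apply: (continuous_minus (V := R_NormedModule)); [exact: pow_gauss_continuous | exact: gauss_continuous].
have split : RInt (fun v => v ^ 2 * gauss v - gauss v) (- a) b =
    RInt (fun v => v ^ 2 * gauss v) (- a) b - RInt gauss (- a) b.
  exact: (RInt_minus (V := R_CompleteNormedModule) _ _ _ _ (ex_RInt_pow_gauss 2 _ _) (ex_RInt_gauss _ _)).
by move: split; rewrite (is_RInt_unique _ _ _ _ parts); lra.
Qed.

Definition cube_moment_tail (b : R) : R := (b ^ 2 + 2) * gauss b.

Lemma RInt_gauss_moment3 b1 b2 :
  RInt (fun v => v ^ 3 * gauss v) b1 b2 = cube_moment_tail b1 - cube_moment_tail b2.
Proof.
apply: is_RInt_unique.
have -> : cube_moment_tail b1 - cube_moment_tail b2 = minus (- cube_moment_tail b2) (- cube_moment_tail b1).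
  by rewrite /minus /plus /opp /=; ring.
apply: (is_RInt_derive (V := R_CompleteNormedModule) (fun v => - cube_moment_tail v)) => x _.
  by rewrite /cube_moment_tail /gauss; auto_derive => //; rewrite gauss_auto_derive; field.
exact: pow_gauss_continuous.
Qed.

Lemma cube_moment_tail_ge0 b : 0 <= cube_moment_tail b.
Proof. by rewrite /cube_moment_tail; have := gauss_gt0 b; have := pow2_ge_0 b; nra. Qed.

Lemma cube_moment_tail0 : cube_moment_tail 0 = 2.
Proof.
rewrite /cube_moment_tail /gauss; have -> : - 0 ^ 2 / 2 = 0 by field.
by rewrite exp_0; ring.
Qed.

End GaussianIntegral.

Definition tail_weight (a : R) : R := (1 + a ^ 2) * gauss a.

Lemma gauss_le_tail_weight a : gauss a <= tail_weight a.
Proof. by rewrite /tail_weight; have := gauss_gt0 a; have := pow2_ge_0 a; nra. Qed.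

Lemma mul_gauss_le_tail_weight a : 0 <= a -> a * gauss a <= tail_weight a.
Proof.
rewrite /tail_weight => a_ge0; have : a <= 1 + a ^ 2 by nra.
by have := gauss_gt0 a; nra.
Qed.

Lemma tail_weight_ge0 a : 0 <= tail_weight a.
Proof. by have := gauss_le_tail_weight a; have := gauss_gt0 a; lra. Qed.

Lemma cube_moment_tail_le a : cube_moment_tail a <= 2 * tail_weight a.
Proof. by rewrite /cube_moment_tail /tail_weight; have := gauss_gt0 a; have := pow2_ge_0 a; nra. Qed.

(* [exp (a^2/2) >= (1 + a^2/4)^2] gives [tail_weight a * (4 + a^2) <= 16]. *)
Lemma tail_weight_small eps : 0 < eps -> exists A, 0 <= A /\ forall a, A <= a -> tail_weight a < eps.
Proof.
move=> eps_gt0; have q_gt0 : 0 < 16 / eps by apply: Rdiv_lt_0_compat; lra.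
exists (16 / eps + 1); split => [|a a_ge]; first lra.
have a2_ge0 := pow2_ge_0 a; have ga := gauss_gt0 a.
have exp_sqr : exp (a ^ 2 / 2) = exp (a ^ 2 / 4) * exp (a ^ 2 / 4).
  by rewrite -exp_plus; congr exp; field.
have exp_lb : (1 + a ^ 2 / 4) * (1 + a ^ 2 / 4) <= exp (a ^ 2 / 2).
  by rewrite exp_sqr; have := exp_ineq1_le (a ^ 2 / 4) => e; apply: Rmult_le_compat; lra.
have gauss_exp : gauss a * exp (a ^ 2 / 2) = 1.
  by rewrite /gauss -exp_plus -exp_0; congr exp; field.
have weight_bd : tail_weight a * (4 + a ^ 2) <= 16.
  rewrite /tail_weight; have : gauss a * ((1 + a ^ 2 / 4) * (1 + a ^ 2 / 4)) <= 1 by nra.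
  nra.
have : 16 < eps * (4 + a ^ 2).
  have : 16 / eps < 4 + a ^ 2 by nra.
  by move/(Rmult_lt_compat_l eps) => /(_ eps_gt0); rewrite /Rdiv -Rmult_assoc
    (Rmult_comm eps 16) Rmult_assoc Rinv_r; lra.
by have := tail_weight_ge0 a; nra.
Qed.

Lemma improper_integral_of_bound (f : R -> R) l K : 0 <= K -> (forall x, continuous f x) ->
  (forall a b, 0 <= a -> 0 <= b -> Rabs (RInt f (- a) b - l) <= K * (tail_weight a + tail_weight b)) ->
  improper_integral f l.
Proof.
move=> K_ge0 f_cont bd; split.
  move=> a b; constructor; apply/ex_RInt_Reals_0/ex_RInt_continuous_R => z _; exact: f_cont.
move=> eps eps_gt0.
have [|A [A_ge0 small]] := tail_weight_small (eps / (2 * K + 1)).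
  by apply: Rdiv_lt_0_compat; lra.
exists A => a b pr a_ge b_ge; rewrite -RInt_Reals.
apply: (Rle_lt_trans _ _ _ (bd a b ltac:(lra) ltac:(lra))).
have := small a a_ge; have := small b b_ge; have := tail_weight_ge0 a; have := tail_weight_ge0 b.
have : (2 * K + 1) * (eps / (2 * K + 1)) = eps by field; lra.
nra.
Qed.

Section CubicDomination.
Variables (h : R -> R) (K : R).
Hypotheses (K_ge0 : 0 <= K) (h_cont : forall x, continuous h x).

Let ex_RInt_h a b : ex_RInt h a b.
Proof. by apply: ex_RInt_continuous_R => z _; apply: h_cont. Qed.

Lemma RInt_cubic_dominated_diff b1 b2 :
  (forall v, 0 <= v -> Rabs (h v) <= K * v ^ 3 * gauss v) -> 0 <= b1 -> b1 <= b2 ->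
  Rabs (RInt h 0 b2 - RInt h 0 b1) <= K * (cube_moment_tail b1 - cube_moment_tail b2).
Proof.
move=> h_bd b1_ge0 b12.
have -> : RInt h 0 b2 - RInt h 0 b1 = RInt h b1 b2.
  rewrite -(RInt_Chasles (V := R_CompleteNormedModule) h 0 b1 b2) //.
  by rewrite /plus /=; ring.
apply: (Rle_trans _ _ _ (abs_RInt_le _ _ _ b12 (ex_RInt_h _ _))).
rewrite -RInt_gauss_moment3.
have -> : K * RInt (fun v => v ^ 3 * gauss v) b1 b2 = RInt (fun v => K * (v ^ 3 * gauss v)) b1 b2.
  by symmetry; apply: (RInt_scal (V := R_CompleteNormedModule)); apply: ex_RInt_pow_gauss.
apply: RInt_le => // [|| x x_in].
- apply: ex_RInt_continuous_R => z _.
  by apply: (continuous_comp h Rabs); [apply: h_cont | apply: continuous_Rabs].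
- apply: ex_RInt_continuous_R => z _.
  by apply: (continuous_scal_r K (fun x => x ^ 3 * gauss x)); apply: pow_gauss_continuous.
- by rewrite -Rmult_assoc; apply: h_bd; lra.
Qed.

(* The partial integrals [P b = RInt h 0 b] satisfy [|P b' - P b| <= K cube_moment_tail b] for
   [b <= b']; the supremum of [P b - K cube_moment_tail b] is their limit. *)
Lemma cubic_dominated_limit_pos :
  (forall v, 0 <= v -> Rabs (h v) <= K * v ^ 3 * gauss v) ->
  exists l, Rabs l <= 2 * K /\
    forall b, 0 <= b -> Rabs (RInt h 0 b - l) <= K * cube_moment_tail b.
Proof.
move=> h_bd; set P := fun b => RInt h 0 b.
have P0 : P 0 = 0 by apply: RInt_point.
have band b b' : 0 <= b -> 0 <= b' -> P b' - K * cube_moment_tail b' <= P b + K * cube_moment_tail b.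
  move=> b_ge0 b'_ge0; have := cube_moment_tail_ge0 b; have := cube_moment_tail_ge0 b'.
  have [bb'|b'b] := Rle_dec b b'.
  - by have /Rabs_le_between := RInt_cubic_dominated_diff _ _ h_bd b_ge0 bb'; rewrite -/(P b) -/(P b'); nra.
  - have /Rabs_le_between := RInt_cubic_dominated_diff _ _ h_bd b'_ge0 (Rlt_le _ _ (Rnot_le_lt _ _ b'b)).
    by rewrite -/(P b) -/(P b'); nra.
pose E y := exists b, 0 <= b /\ y = P b - K * cube_moment_tail b.
have E_bd : bound E.
  by exists (P 0 + K * cube_moment_tail 0) => y [b [b_ge0 ->]]; apply: band; lra.
have E_ne : exists y, E y by exists (P 0 - K * cube_moment_tail 0), 0; split; lra.
have [l [l_ub l_lub]] := completeness E E_bd E_ne.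
have lo b : 0 <= b -> P b - K * cube_moment_tail b <= l by move=> b_ge0; apply: l_ub; exists b.
have hi b : 0 <= b -> l <= P b + K * cube_moment_tail b.
  by move=> b_ge0; apply: l_lub => y [b' [b'_ge0 ->]]; apply: band.
exists l; split => [|b b_ge0].
- by have := lo 0 (Rle_refl 0); have := hi 0 (Rle_refl 0); rewrite P0 cube_moment_tail0 => ? ?;
    apply: Rabs_le; lra.
- by have := lo b b_ge0; have := hi b b_ge0; rewrite -/(P b) => ? ?; apply: Rabs_le; lra.
Qed.

End CubicDomination.

Lemma cubic_dominated_limit (h : R -> R) K : 0 <= K -> (forall x, continuous h x) ->
  (forall v, Rabs (h v) <= K * Rabs v ^ 3 * gauss v) ->
  exists l, Rabs l <= 4 * K /\ forall a b, 0 <= a -> 0 <= b ->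
    Rabs (RInt h (- a) b - l) <= 2 * K * (tail_weight a + tail_weight b).
Proof.
move=> K_ge0 h_cont h_bd.
have hN_cont x : continuous (fun y => h (- y)) x.
  by apply: (continuous_comp (fun y => - y) h); [apply/continuous_opp/continuous_id | apply: h_cont].
have h_bd_pos v : 0 <= v -> Rabs (h v) <= K * v ^ 3 * gauss v.
  by move=> v_ge0; rewrite -{2}(Rabs_pos_eq v v_ge0); apply: h_bd.
have hN_bd v : 0 <= v -> Rabs (h (- v)) <= K * v ^ 3 * gauss v.
  by move=> v_ge0; rewrite -{2}(Rabs_pos_eq v v_ge0) -(Rabs_Ropp v) -(gaussN v); apply: h_bd.
have [l1 [l1_bd l1_lim]] := cubic_dominated_limit_pos _ _ K_ge0 h_cont h_bd_pos.
have [l2 [l2_bd l2_lim]] := cubic_dominated_limit_pos (fun y => h (- y)) K K_ge0 hN_cont hN_bd.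
exists (l1 + l2); split => [|a b a_ge0 b_ge0].
  by apply: (Rle_trans _ _ _ (Rabs_triang _ _)); lra.
rewrite RInt_split0 //.
have -> : RInt h 0 b + RInt (fun y => h (- y)) 0 a - (l1 + l2) =
  (RInt h 0 b - l1) + (RInt (fun y => h (- y)) 0 a - l2) by ring.
apply: (Rle_trans _ _ _ (Rabs_triang _ _)).
have := l1_lim b b_ge0; have := l2_lim a a_ge0.
have := cube_moment_tail_le a; have := cube_moment_tail_le b; nra.
Qed.

Lemma RInt_affine_cubic_err G0 A (h : R -> R) lh K a b : (forall x, continuous h x) ->
  0 <= a -> 0 <= b -> Rabs (RInt h (- a) b - lh) <= 2 * K * (tail_weight a + tail_weight b) ->
  Rabs (RInt (fun v => G0 * (v ^ 1 * gauss v) + A * (v ^ 2 * gauss v) + h v) (- a) b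
        - (A * sqrt (2 * PI) + lh))
    <= (Rabs G0 + 3 * Rabs A + 2 * K) * (tail_weight a + tail_weight b).
Proof.
move=> h_cont a_ge0 b_ge0 h_err.
have lin_cont x : continuous (fun v => G0 * (v ^ 1 * gauss v) + A * (v ^ 2 * gauss v)) x.
  by apply: ex_derive_continuous_R; rewrite /gauss; auto_derive.
rewrite RInt_Rplus // RInt_Rplus; try by move=> x;
  apply: (continuous_scal_r _ (fun v => v ^ _ * gauss v)); apply: pow_gauss_continuous.
rewrite !RInt_Rscal; try exact: pow_gauss_continuous.
rewrite RInt_gauss_moment1 RInt_gauss_moment2.
set W := tail_weight a + tail_weight b.
have m1 : Rabs (gauss a - gauss b) <= W.
  by apply: Rabs_le; have := gauss_le_tail_weight a; have := gauss_le_tail_weight b;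
    have := gauss_gt0 a; have := gauss_gt0 b; rewrite /W; lra.
have m2 : Rabs (RInt gauss (- a) b - b * gauss b - a * gauss a - sqrt (2 * PI)) <= 3 * W.
  have := RInt_gauss_err _ _ a_ge0 b_ge0; have := mul_gauss_le_tail_weight _ a_ge0.
  have := mul_gauss_le_tail_weight _ b_ge0; have := gauss_le_tail_weight a.
  have := gauss_le_tail_weight b; have := Rmult_le_pos _ _ a_ge0 (Rlt_le _ _ (gauss_gt0 a)).
  have := Rmult_le_pos _ _ b_ge0 (Rlt_le _ _ (gauss_gt0 b)).
  move=> ? ? ? ? ? ? /Rabs_le_between ?; apply: Rabs_le; rewrite /W; lra.
have -> : G0 * (gauss a - gauss b) + A * (RInt gauss (- a) b - b * gauss b - a * gauss a) + RInt h (- a) b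
    - (A * sqrt (2 * PI) + lh) = G0 * (gauss a - gauss b)
    + A * (RInt gauss (- a) b - b * gauss b - a * gauss a - sqrt (2 * PI)) + (RInt h (- a) b - lh) by ring.
apply: (Rle_trans _ _ _ (Rabs_triang _ _)).
apply: (Rle_trans _ _ _ (Rplus_le_compat_r _ _ _ (Rabs_triang _ _))); rewrite !Rabs_mult.
have := Rabs_pos G0; have := Rabs_pos A; have W_ge0 : 0 <= W.
  by have := tail_weight_ge0 a; have := tail_weight_ge0 b; rewrite /W; lra.
by rewrite -/W in h_err; nra.
Qed.

Lemma improper_integral_affine_cubic G0 A (h : R -> R) lh K : 0 <= K -> (forall x, continuous h x) ->
  (forall a b, 0 <= a -> 0 <= b -> Rabs (RInt h (- a) b - lh) <= 2 * K * (tail_weight a + tail_weight b)) ->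
  improper_integral (fun v => (G0 * (v ^ 1 * gauss v) + A * (v ^ 2 * gauss v) + h v) / sqrt (2 * PI))
    (A + lh / sqrt (2 * PI)).
Proof.
move=> K_ge0 h_cont h_err.
have sPI_gt0 : 0 < sqrt (2 * PI) by apply: sqrt_lt_R0; have := PI_RGT_0; lra.
have lin_cont x : continuous (fun v => G0 * (v ^ 1 * gauss v) + A * (v ^ 2 * gauss v) + h v) x.
  apply: (continuous_plus (V := R_NormedModule)); last exact: h_cont.
  by apply: ex_derive_continuous_R; rewrite /gauss; auto_derive.
apply: (improper_integral_of_bound _ _ ((Rabs G0 + 3 * Rabs A + 2 * K) / sqrt (2 * PI))).
- by apply: Rdiv_le_0_compat; [have := Rabs_pos G0; have := Rabs_pos A; lra | lra].
- move=> x; apply: (continuous_mult (K := R_AbsRing) _ (fun _ => / sqrt (2 * PI)));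
    [exact: lin_cont | exact: continuous_const].
move=> a b a_ge0 b_ge0.
rewrite (RInt_ext _ (fun v => / sqrt (2 * PI) * (G0 * (v ^ 1 * gauss v) + A * (v ^ 2 * gauss v) + h v)));
  last by move=> v _; rewrite /Rdiv Rmult_comm.
rewrite RInt_Rscal //.
have := RInt_affine_cubic_err G0 A _ _ _ _ _ h_cont a_ge0 b_ge0 (h_err a b a_ge0 b_ge0).
set I := RInt _ _ _ => err.
have -> : / sqrt (2 * PI) * I - (A + lh / sqrt (2 * PI)) =
  / sqrt (2 * PI) * (I - (A * sqrt (2 * PI) + lh)) by field; lra.
rewrite Rabs_mult Rabs_pos_eq; last by apply/Rlt_le/Rinv_0_lt_compat.
have -> : forall B W : R, B / sqrt (2 * PI) * W = / sqrt (2 * PI) * (B * W).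
  by move=> B W; field; lra.
by apply: Rmult_le_compat_l; [apply/Rlt_le/Rinv_0_lt_compat | exact: err].
Qed.

(* Splitting [G (sigma v) = G0 + a sigma v + O(v^2)], the constant part has Gaussian mean [0],
   the linear part contributes [a sigma], and the remainder is cubically dominated. *)
Lemma gauss_expect_linear_approx (G : R -> R) G0 a c sigma :
  0 < sigma -> 0 <= c -> (forall s, continuous G s) ->
  (forall s, Rabs (G s - G0 - a * s) <= c / 2 * s ^ 2) ->
  exists l, gauss_expect (fun v => G (sigma * v) * v) l /\ Rabs (l / sigma - a) <= c * sigma.
Proof.
move=> sigma_gt0 c_ge0 G_cont G_approx.
have sPI_ge2 : 2 <= sqrt (2 * PI) by rewrite sqrt_2PI; have := sqrt_PI2_ge1; lra.
have Gs_cont v : continuous (fun v => G (sigma * v)) v.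
  apply: (continuous_comp (fun v => sigma * v) G); last exact: G_cont.
  by apply: ex_derive_continuous_R; auto_derive.
set K := c * sigma ^ 2 / 2; have K_ge0 : 0 <= K by rewrite /K; have := pow2_ge_0 sigma; nra.
set h := fun v => (G (sigma * v) - G0 - a * (sigma * v)) * v * gauss v.
have h_cont x : continuous h x.
  apply: (continuous_mult (K := R_AbsRing) (fun v => (G (sigma * v) - G0 - a * (sigma * v)) * v) gauss);
    last exact: gauss_continuous.
  apply: (continuous_mult (K := R_AbsRing) (fun v => G (sigma * v) - G0 - a * (sigma * v)) id);
    last exact: continuous_id.
  apply: (continuous_minus (V := R_NormedModule)); last by apply: ex_derive_continuous_R; auto_derive.
  by apply: (continuous_minus (V := R_NormedModule)); [apply: Gs_cont | apply: continuous_const].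
have h_bd v : Rabs (h v) <= K * Rabs v ^ 3 * gauss v.
  rewrite /h !Rabs_mult (Rabs_pos_eq (gauss v)); last exact/Rlt_le/gauss_gt0.
  have -> : K * Rabs v ^ 3 * gauss v = c / 2 * (sigma * v) ^ 2 * Rabs v * gauss v.
    by rewrite /K -[(sigma * v) ^ 2]pow2_abs Rabs_mult (Rabs_pos_eq sigma); [field | lra].
  apply: Rmult_le_compat_r; first exact/Rlt_le/gauss_gt0.
  by apply: Rmult_le_compat_r; [apply: Rabs_pos | apply: G_approx].
have [lh [lh_bd lh_err]] := cubic_dominated_limit _ _ K_ge0 h_cont h_bd.
exists (a * sigma + lh / sqrt (2 * PI)); split.
  rewrite /gauss_expect (_ : (fun v => _) = fun v =>
    (G0 * (v ^ 1 * gauss v) + a * sigma * (v ^ 2 * gauss v) + h v) / sqrt (2 * PI)).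
    exact: (improper_integral_affine_cubic G0 (a * sigma) _ _ _ K_ge0 h_cont lh_err).
  by apply: functional_extensionality => v; rewrite /h /gauss; congr (_ / _); ring.
have -> : (a * sigma + lh / sqrt (2 * PI)) / sigma - a = lh / (sqrt (2 * PI) * sigma) by field; lra.
rewrite Rabs_div; last by nra.
rewrite (Rabs_pos_eq (sqrt (2 * PI) * sigma)); last by nra.
apply: (Rmult_le_reg_r (sqrt (2 * PI) * sigma)); first by nra.
rewrite /Rdiv Rmult_assoc Rinv_l ?Rmult_1_r; last by nra.
apply: (Rle_trans _ _ _ lh_bd).
have : 0 <= c * sigma ^ 2 * (sqrt (2 * PI) - 2).
  by apply: Rmult_le_pos; [have := pow2_ge_0 sigma; nra | lra].
rewrite /K; have -> : 4 * (c * sigma ^ 2 / 2) = 2 * (c * sigma ^ 2) by field.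
by nra.
Qed.

Section SmoothFunction.
Context {d : nat} {F : vec d -> R} {gF : vec d -> vec d}.
Hypothesis F_grad : has_gradient F gF.

Lemma is_derive_line y xi s :
  is_derive (fun s => F (vadd y (vscale s xi))) s (dot (gF (vadd y (vscale s xi))) xi).
Proof.
apply/is_derive_Reals => eps eps_gt0.
set x0 := vadd y (vscale s xi); set n := vnorm xi + 1.
have n_gt0 : 0 < n by have := vnorm_ge0 xi; rewrite /n; lra.
have [|delta [delta_gt0 approx]] := F_grad x0 (eps / (2 * n)); first by apply: Rdiv_lt_0_compat; lra.
have delta'_gt0 : 0 < delta / n by apply: Rdiv_lt_0_compat.
exists (mkposreal _ delta'_gt0) => /= h h_neq0 h_small.
have h_pos := Rabs_pos_lt _ h_neq0.
have step_small : vnorm (vscale h xi) < delta.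
  rewrite vnorm_scale; apply: (Rle_lt_trans _ (Rabs h * n)).
    by apply: Rmult_le_compat_l; [apply: Rabs_pos | rewrite /n; lra].
  have -> : delta = delta / n * n by field; lra.
  exact: Rmult_lt_compat_r.
have := approx _ step_small; rewrite vadd_scaleD -/x0 dotZr vnorm_scale => bd.
have -> : (F (vadd y (vscale (s + h) xi)) - F x0) / h - dot (gF x0) xi =
  (F (vadd y (vscale (s + h) xi)) - F x0 - h * dot (gF x0) xi) / h by field.
rewrite Rabs_div //; apply: (Rmult_lt_reg_r (Rabs h)) => //.
rewrite /Rdiv Rmult_assoc Rinv_l ?Rmult_1_r; last lra.
apply: (Rle_lt_trans _ _ _ bd).
have : eps / (2 * n) * vnorm xi < eps.
  apply: (Rmult_lt_reg_r (2 * n)); first lra.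
  have -> : eps / (2 * n) * vnorm xi * (2 * n) = eps * vnorm xi by field; lra.
  by have := vnorm_ge0 xi; rewrite /n; nra.
nra.
Qed.

Context {L : R}.
Hypothesis gF_lip : grad_lipschitz gF L.

Lemma line_taylor y xi s :
  Rabs (F (vadd y (vscale s xi)) - F y - dot (gF y) xi * s) <= L * vnorm xi ^ 2 / 2 * s ^ 2.
Proof.
have := taylor_lipschitz_deriv _ _ (dot (gF y) xi) (L * vnorm xi ^ 2) s (is_derive_line y xi).
rewrite vadd_scale0 Rmult_comm; apply => u.
rewrite -dotBl; apply: (Rle_trans _ _ _ (cauchy_schwarz _ _)).
have := gF_lip y (vscale u xi); rewrite vnorm_scale => lip.
have := vnorm_ge0 xi; have := vnorm_ge0 (vsub (gF (vadd y (vscale u xi))) (gF y)).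
by have := Rabs_pos u; nra.
Qed.

Lemma descent x xi : F (vadd x xi) <= F x + dot (gF x) xi + L / 2 * vnorm xi ^ 2.
Proof.
have := line_taylor x xi 1.
have -> : vscale 1 xi = xi by apply: vec_ext => i; rewrite /vscale; ring.
by move/Rabs_le_between; lra.
Qed.

Lemma gauss_smoothed_directional_deriv sigma y xi : 0 <= L -> 0 < sigma -> vnorm xi = 1 ->
  exists l, gauss_expect (fun v => F (vadd y (vscale (sigma * v) xi)) * v) l /\
    Rabs (l / sigma - dot (gF y) xi) <= L * sigma.
Proof.
move=> L_ge0 sigma_gt0 xi_unit.
apply: (gauss_expect_linear_approx (fun s => F (vadd y (vscale s xi))) (F y)) => // [s|s].
  by apply: ex_derive_continuous_R; eexists; apply: is_derive_line.
by have := line_taylor y xi s; rewrite xi_unit pow1 Rmult_1_r Rmult_comm.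
Qed.

Context {xstar : vec d}.
Hypotheses (L_gt0 : 0 < L) (xstar_min : forall y, F xstar <= F y).

(* one gradient step of length [1 / L] decreases [F] by at least [|gF x|^2 / (2 L)] *)
Lemma grad_sqr_le_gap x : dot (gF x) (gF x) <= 2 * L * (F x - F xstar).
Proof.
set g := gF x.
have := descent x (vscale (- / L) g); have := xstar_min (vadd x (vscale (- / L) g)).
rewrite vnorm_sqr dotZl !dotZr -/g.
have step : - / L * dot g g + L / 2 * (- / L * (- / L * dot g g)) = - (dot g g / (2 * L)).
  by field; lra.
move=> min desc; have -> : dot g g = 2 * L * (dot g g / (2 * L)) by field; lra.
by apply: Rmult_le_compat_l; lra.
Qed.

Lemma grad_argmin u : dot (gF xstar) u = 0.
Proof.
have gg0 : dot (gF xstar) (gF xstar) = 0.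
  by have := grad_sqr_le_gap xstar; have := dot_self_ge0 (gF xstar); lra.
have := cauchy_schwarz (gF xstar) u; rewrite /vnorm gg0 sqrt_0 Rmult_0_l.
by have := Rabs_pos (dot (gF xstar) u) => ? ?; apply: Rabs_eq_0; lra.
Qed.

Lemma gap_le_dist_sqr x : F x - F xstar <= L / 2 * vnorm (vsub x xstar) ^ 2.
Proof. by have := descent xstar (vsub x xstar); rewrite vaddBC grad_argmin; lra. Qed.

End SmoothFunction.

Lemma strong_convex_grad_dist {d} (F : vec d -> R) gF tau x y : strongly_convex F gF tau ->
  dot (gF x) (vsub x y) >= F x - F y + tau / 2 * vnorm (vsub x y) ^ 2.
Proof.
move=> F_sc; have := F_sc x (vsub y x); rewrite vaddBC vnorm_subC dotBr.
by rewrite dotBr; lra.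
Qed.

Lemma strong_convex_le_lipschitz {d} (F : vec d -> R) gF tau L (xi : vec d) :
  has_gradient F gF -> grad_lipschitz gF L -> strongly_convex F gF tau -> vnorm xi = 1 -> tau <= L.
Proof.
move=> F_grad gF_lip F_sc xi_unit.
have := F_sc xi xi; have := descent F_grad gF_lip xi xi; rewrite xi_unit; lra.
Qed.

Lemma contraction_iter (r : nat -> R) rho c : 0 <= rho ->
  (forall t, r t.+1 - c <= rho * (r t - c)) -> forall t, r t - c <= rho ^ t * (r O - c).
Proof.
move=> rho_ge0 step; elim => [|t IH] /=; first lra.
by apply: (Rle_trans _ _ _ (step t)); rewrite Rmult_assoc; apply: Rmult_le_compat_l.
Qed.

Definition noise_radius_coef (tau L : R) : R := 4 / tau ^ 2 + 1 / (3 * tau * L).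

Section PerturbedGradientStep.
Context {d : nat} {F : vec d -> R} {gF : vec d -> vec d} {tau L : R} {xstar : vec d}.
Hypotheses (F_grad : has_gradient F gF) (gF_lip : grad_lipschitz gF L)
  (F_sc : strongly_convex F gF tau) (tau_gt0 : 0 < tau) (L_gt0 : 0 < L)
  (xstar_min : forall y, F xstar <= F y).

(* The step [x - (gF x + e) / (8 L)] contracts [|x - xstar|^2] by [1 - tau / (16 L)] up to a
   noise term; the cross terms [<e, u>] and [<g, e>] are absorbed by Young's inequality. *)
Lemma perturbed_step_dist_sqr x e Eb : dot e e <= Eb ->
  vnorm (vsub (vsub x (vscale (/ (8 * L)) (vadd (gF x) e))) xstar) ^ 2 - noise_radius_coef tau L * Eb
    <= (1 - tau / (16 * L)) * (vnorm (vsub x xstar) ^ 2 - noise_radius_coef tau L * Eb).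
Proof.
move=> ee_le; set lam := / (8 * L); set u := vsub x xstar; set g := gF x.
have lam_gt0 : 0 < lam by apply: Rinv_0_lt_compat; lra.
have -> : vsub (vsub x (vscale lam (vadd g e))) xstar = vsub u (vscale lam (vadd g e)).
  by apply: vec_ext => i; rewrite /u /vsub /vscale /vadd; ring.
have gap_ge0 : 0 <= F x - F xstar by have := xstar_min x; lra.
have gg_le : dot g g <= 2 * L * (F x - F xstar) by apply: grad_sqr_le_gap.
have gu_ge : dot g u >= F x - F xstar + tau / 2 * dot u u.
  by rewrite -vnorm_sqr; apply: strong_convex_grad_dist.
clearbody u g.
have young_eu : - 2 * dot e u <= tau / 2 * dot u u + 2 / tau * dot e e.
  have := dot_young (tau / 2) u (vscale (-1) e) (Rdiv_lt_0_compat _ _ tau_gt0 Rlt_0_2).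
  rewrite !dotZl !dotZr (dotC u e).
  have -> : -1 * (-1 * dot e e) / (tau / 2) = 2 / tau * dot e e by field; lra.
  lra.
have young_ge : 2 * dot g e <= 3 * dot g g + dot e e / 3 by apply: dot_young; lra.
rewrite !vnorm_sqr !dotE (dotC u g) (dotC u e) (dotC e g).
have quad : lam * (lam * (dot g g + 2 * dot g e + dot e e)) <= lam * (F x - F xstar) + 4 / 3 * lam ^ 2 * dot e e.
  have e8 : lam ^ 2 * (8 * L) = lam by rewrite /lam; field; lra.
  have : dot g g + 2 * dot g e + dot e e <= 8 * L * (F x - F xstar) + 4 / 3 * dot e e by lra.
  move/(Rmult_le_compat_l _ _ _ (pow2_ge_0 lam)).
  have -> : lam ^ 2 * (8 * L * (F x - F xstar) + 4 / 3 * dot e e) =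
    lam ^ 2 * (8 * L) * (F x - F xstar) + 4 / 3 * lam ^ 2 * dot e e by ring.
  by rewrite e8 => bd; apply: (Rle_trans _ _ _ _ bd); right; ring.
have cross : - 2 * lam * (dot g u + dot e u) <=
    - 2 * lam * (F x - F xstar) - tau / (16 * L) * dot u u + 2 * lam / tau * dot e e.
  have := Rmult_le_compat_l _ _ _ (Rlt_le _ _ lam_gt0) young_eu.
  have := Rmult_le_compat_l _ _ _ (Rlt_le _ _ lam_gt0) (Rge_le _ _ gu_ge).
  have -> : tau / (16 * L) * dot u u = lam * (tau / 2 * dot u u) by rewrite /lam; field; lra.
  have -> : 2 * lam / tau * dot e e = lam * (2 / tau * dot e e) by field; lra.
  lra.
have noise : (2 * lam / tau + 4 / 3 * lam ^ 2) * dot e e <= tau / (16 * L) * noise_radius_coef tau L * Eb.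
  have -> : tau / (16 * L) * noise_radius_coef tau L = 2 * lam / tau + 4 / 3 * lam ^ 2.
    by rewrite /lam /noise_radius_coef; field; lra.
  apply: Rmult_le_compat_l => //.
  have : 0 < 2 * lam / tau by apply: Rdiv_lt_0_compat; lra.
  by have := pow2_ge_0 lam; lra.
have : 0 <= lam * (F x - F xstar) by apply: Rmult_le_pos; lra.
lra.
Qed.

End PerturbedGradientStep.

(* The factor of [sigma ^ (2 M - 1)] in the assumed Gauss-Hermite error bound. *)
Definition gh_err_const (M : nat) (C : R) : R :=
  C * (INR (fact M) * sqrt PI / (2 ^ M * INR (fact (2 * M)))).

Lemma gh_err_const_ge0 M C : 0 <= C -> 0 <= gh_err_const M C.
Proof.
move=> C_ge0; apply: Rmult_le_pos => //; apply: Rdiv_le_0_compat.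
  by apply: Rmult_le_pos; [apply: pos_INR | apply: sqrt_pos].
by apply: Rmult_lt_0_compat; [apply: pow_lt; lra | apply: INR_fact_lt_0].
Qed.

Lemma gh_err_const_sqr M C :
  gh_err_const M C ^ 2 = C ^ 2 * INR (fact M) ^ 2 * PI / (4 ^ M * INR (fact (2 * M)) ^ 2).
Proof.
have := INR_fact_lt_0 (2 * M); have : 0 < 2 ^ M by apply: pow_lt; lra.
have -> : 4 ^ M = 2 ^ M * 2 ^ M by rewrite -Rpow_mult_distr; congr pow; ring.
have -> : PI = sqrt PI ^ 2 by rewrite pow2_sqrt //; have := PI_RGT_0; lra.
by rewrite /gh_err_const => ? ?; field; lra.
Qed.

Lemma noise_radius_le_delta_sigma d M tau L sigma C : 0 < tau -> 0 < L ->
  noise_radius_coef tau L * (INR d * ((L + gh_err_const M C) * sigma) ^ 2)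
    <= delta_sigma d M tau L sigma C.
Proof.
move=> tau_gt0 L_gt0; rewrite /delta_sigma.
have -> : C ^ 2 * INR (fact M) ^ 2 * PI * INR d / (4 ^ M * INR (fact (2 * M)) ^ 2) =
    gh_err_const M C ^ 2 * INR d.
  have := INR_fact_lt_0 (2 * M); have : 0 < 4 ^ M by apply: pow_lt; lra.
  by rewrite gh_err_const_sqr => ? ?; field; lra.
set B := gh_err_const M C; set P := / tau ^ 2; set Q := / (tau * L).
have P_gt0 : 0 < P by apply/Rinv_0_lt_compat/pow_lt.
have Q_gt0 : 0 < Q by apply/Rinv_0_lt_compat/Rmult_lt_0_compat.
have dsig_ge0 : 0 <= INR d * sigma ^ 2 by apply: Rmult_le_pos; [apply: pos_INR | apply: pow2_ge_0].
have sqr_le : (L + B) ^ 2 <= 3 * L ^ 2 + 3 / 2 * B ^ 2 by have := pow2_ge_0 (2 * L - B); lra.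
have -> : noise_radius_coef tau L * (INR d * ((L + B) * sigma) ^ 2) =
  INR d * sigma ^ 2 * ((4 * P + Q / 3) * (L + B) ^ 2).
  by rewrite /noise_radius_coef /P /Q; field; lra.
have -> : (128 / tau ^ 2 + 16 / (tau * L)) * L ^ 2 * INR d * sigma ^ 2 +
    (8 / tau ^ 2 + 1 / (2 * tau * L)) * (B ^ 2 * INR d) * sigma ^ 2 =
  INR d * sigma ^ 2 * ((128 * P + 16 * Q) * L ^ 2 + (8 * P + Q / 2) * B ^ 2).
  by rewrite /P /Q; field; lra.
apply: Rmult_le_compat_l => //.
have := pow2_ge_0 L; have := pow2_ge_0 B; nra.
Qed.

Section DGSIteration.
Context {d M : nat} {F : vec d -> R} {gF : vec d -> vec d} {tau L sigma C : R}
  {xstar : vec d} {nodes : list R} {Xi : nat -> 'I_d -> vec d} {x : nat -> vec d}.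
Hypotheses (F_grad : has_gradient F gF) (tau_gt0 : 0 < tau) (F_sc : strongly_convex F gF tau)
  (L_gt0 : 0 < L) (gF_lip : grad_lipschitz gF L) (xstar_min : forall y, F xstar <= F y)
  (M_ge1 : (1 <= M)%N) (sigma_in : 0 < sigma < 1) (C_gt0 : 0 < C)
  (gh_err : forall (y xi : vec d), vnorm xi = 1 ->
     forall l, gauss_expect (fun v => F (vadd y (vscale (sigma * v) xi)) * v) l ->
     Rabs (gh_deriv M nodes F sigma y xi - l / sigma) <= gh_err_const M C * sigma ^ (2 * M - 1))
  (Xi_on : forall t, orthonormal_basis (Xi t))
  (x_step : forall t, x t.+1 = vsub (x t) (vscale (/ (8 * L)) (dgs M nodes F sigma (Xi t) (x t)))).

Let dist_sqr t := vnorm (vsub (x t) xstar) ^ 2.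
Let noise := INR d * ((L + gh_err_const M C) * sigma) ^ 2.
Let rate := 1 - tau / (16 * L).

Lemma sigma_pow_le : sigma ^ (2 * M - 1) <= sigma.
Proof.
have -> : (2 * M - 1 = (2 * M - 2).+1)%N by case: M M_ge1 => [//|m] _; rewrite mulnS /=; lia.
by rewrite /=; have := pow_le1 sigma (2 * M - 2) ltac:(lra); have := proj1 sigma_in; nra.
Qed.

Lemma dgs_coord_err t i : Rabs (gh_deriv M nodes F sigma (x t) (Xi t i) - dot (gF (x t)) (Xi t i))
  <= (L + gh_err_const M C) * sigma.
Proof.
have xi_unit := orthonormal_vnorm (Xi_on t) i.
have [l [l_expect l_err]] := gauss_smoothed_directional_deriv F_grad gF_lip sigma (x t) (Xi t i)
  (Rlt_le _ _ L_gt0) (proj1 sigma_in) xi_unit.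
have gh := gh_err (x t) (Xi t i) xi_unit l l_expect.
have := Rmult_le_compat_l _ _ _ (gh_err_const_ge0 M C (Rlt_le _ _ C_gt0)) sigma_pow_le.
have -> : gh_deriv M nodes F sigma (x t) (Xi t i) - dot (gF (x t)) (Xi t i) =
  (gh_deriv M nodes F sigma (x t) (Xi t i) - l / sigma) + (l / sigma - dot (gF (x t)) (Xi t i)) by ring.
by have := Rabs_triang (gh_deriv M nodes F sigma (x t) (Xi t i) - l / sigma)
  (l / sigma - dot (gF (x t)) (Xi t i)); lra.
Qed.

Lemma dgs_step t :
  dist_sqr t.+1 - noise_radius_coef tau L * noise <= rate * (dist_sqr t - noise_radius_coef tau L * noise).
Proof.
set g := gF (x t); set e := vsub (dgs M nodes F sigma (Xi t) (x t)) g.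
have -> : dist_sqr t.+1 = vnorm (vsub (vsub (x t) (vscale (/ (8 * L)) (vadd g e))) xstar) ^ 2.
  rewrite /dist_sqr x_step; congr (vnorm (vsub (vsub _ (vscale _ _)) _) ^ 2).
  by apply: vec_ext => j; rewrite /e /vadd /vsub; ring.
apply: (perturbed_step_dist_sqr F_grad gF_lip F_sc tau_gt0 L_gt0 xstar_min).
exact: (orthonormal_coord_err_sqr (Xi_on t) (dgs_coord_err t)).
Qed.

Lemma dgs_dist_sqr_bound t : dist_sqr t <=
  delta_sigma d M tau L sigma C + rate ^ t * (dist_sqr O - delta_sigma d M tau L sigma C).
Proof.
(* [rate >= 0] relies on [tau <= L], which needs a unit vector; for [d = 0] everything vanishes. *)
have [d0|d_gt0] := posnP d.
  have dist0 s : dist_sqr s = 0 by rewrite /dist_sqr vnorm_dim0 //; ring.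
  have -> : delta_sigma d M tau L sigma C = 0 by rewrite /delta_sigma d0 /=; lra.
  by rewrite !dist0; lra.
have tau_le_L : tau <= L.
  exact: strong_convex_le_lipschitz F_grad gF_lip F_sc (orthonormal_vnorm (Xi_on O) (Ordinal d_gt0)).
have rate_in : 0 <= rate <= 1.
  have : 0 < tau / (16 * L) by apply: Rdiv_lt_0_compat; lra.
  have : tau / (16 * L) <= 1.
    apply: (Rmult_le_reg_r (16 * L)); first lra.
    by rewrite /Rdiv Rmult_assoc Rinv_l; lra.
  by rewrite /rate; lra.
have := contraction_iter _ _ _ (proj1 rate_in) dgs_step t.
have := noise_radius_le_delta_sigma d M tau L sigma C tau_gt0 L_gt0; rewrite -/noise.
have := pow_le1 rate t rate_in; have := pow_le rate t (proj1 rate_in).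
nra.
Qed.

End DGSIteration.

(* The quadrature error is assumed directly. *)
Theorem proposition2 (d M : nat) (F : vec d -> R) (gF : vec d -> vec d)
  (tau L sigma C : R) (xstar : vec d) (nodes : list R)
  (Xi : nat -> 'I_d -> vec d) (x : nat -> vec d) :
  has_gradient F gF ->
  0 < tau -> strongly_convex F gF tau ->
  0 < L -> grad_lipschitz gF L ->
  (forall y, F xstar <= F y) ->
  (1 <= M)%N ->
  0 < sigma < 1 ->
  0 < C ->
  gh_nodes M nodes ->
  (forall (y xi : vec d), vnorm xi = 1 ->
     forall l, gauss_expect (fun v => F (vadd y (vscale (sigma * v) xi)) * v) l ->
     Rabs (gh_deriv M nodes F sigma y xi - l / sigma)
       <= C * (INR (fact M) * sqrt PI / (2 ^ M * INR (fact (2 * M))))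
            * sigma ^ (2 * M - 1)) ->
  (forall t, orthonormal_basis (Xi t)) ->
  (forall t, x (S t) = vsub (x t) (vscale (/ (8 * L)) (dgs M nodes F sigma (Xi t) (x t)))) ->
  forall t, F (x t) - F xstar
    <= 1 / 2 * L * (delta_sigma d M tau L sigma C
         + (1 - tau / (16 * L)) ^ t
           * (vnorm (vsub (x O) xstar) ^ 2 - delta_sigma d M tau L sigma C)).
Proof.
move=> F_grad tau_gt0 F_sc L_gt0 gF_lip xstar_min M_ge1 sigma_in C_gt0 _ gh_err Xi_on x_step t.
apply: (Rle_trans _ _ _ (gap_le_dist_sqr F_grad gF_lip L_gt0 xstar_min (x t))).
rewrite (_ : 1 / 2 * L = L / 2); last by field.
apply: Rmult_le_compat_l; first lra.
exact: (dgs_dist_sqr_bound F_grad tau_gt0 F_sc L_gt0 gF_lip xstar_min M_ge1 sigma_in C_gt0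
  gh_err Xi_on x_step).
Qed.
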